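(* Let $\mathcal{BIP}$ be the class of bipartite graphs. Then: (i) if $j\in\{4,5,6\}$, then $R_1^{\mathcal{BIP}}(4,j)=2j-3$; (ii) if $j\in\{3,7\}$, then $R_1^{\mathcal{BIP}}(4,j)=2j-2$; (iii) if $j\in\{8,9,13,14\}$, then $R_1^{\mathcal{BIP}}(4,j)=2j-1$.
   Context: All graphs are finite and simple. For a graph $G$ and a nonnegative integer $k$, a $k$-sparse $j$-set is a set of $j$ vertices of $G$ inducing a subgraph of maximum degree at most $k$; a $k$-dense $i$-set is a set of $i$ vertices of $G$ that is $k$-sparse in the complement of $G$. For a graph class $\mathcal{G}$, $R_k^{\mathcal{G}}(i,j)$ is the smallest natural number $n$ such that every graph on $n$ vertices in $\mathcal{G}$ has either a $k$-dense $i$-set or a $k$-sparse $j$-set. *)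

From mathcomp Require Import all_boot.
Set Implicit Arguments. Unset Strict Implicit. Unset Printing Implicit Defensive.

Definition simple_graph (n : nat) (e : rel 'I_n) : Prop :=
  symmetric e /\ irreflexive e.

Definition compl_rel (n : nat) (e : rel 'I_n) : rel 'I_n :=
  fun x y => (x != y) && ~~ e x y.

Definition sparse_set (n : nat) (e : rel 'I_n) (k j : nat) (S : {set 'I_n}) : Prop :=
  #|S| = j /\ forall x, x \in S -> #|[set y in S | e x y]| <= k.

Definition dense_set (n : nat) (e : rel 'I_n) (k i : nat) (S : {set 'I_n}) : Prop :=
  sparse_set (compl_rel e) k i S.

Definition graph_class := forall n : nat, rel 'I_n -> Prop.

Definition bipartite : graph_class :=
  fun n e => exists c : 'I_n -> bool, forall x y, e x y -> c x != c y.

Definition ramsey_prop (cls : graph_class) (k i j n : nat) : Prop :=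
  forall e : rel 'I_n, simple_graph e -> cls n e ->
    (exists S, dense_set e k i S) \/ (exists S, sparse_set e k j S).

Definition ramsey_num_is (cls : graph_class) (k i j r : nat) : Prop :=
  ramsey_prop cls k i j r /\ forall m, m < r -> ~ ramsey_prop cls k i j m.

(* In a bipartite graph a 1-dense 4-set is a 4-cycle (two vertices on each side and
   all four cross edges), and a 1-sparse set induces a matching plus isolated vertices.
   Recording the neighbourhood N k of every right-hand vertex k, the graph contains a
   C4 iff two of the N k share two points, and for a fixed left part A the largest
   1-sparse set with left part A has an explicit size.
   Upper bounds: a side with at least j vertices is itself a 1-sparse j-set, which
   settles R = 2j - 1 for j = 8, 9, 13, 14; otherwise both sides are smaller than j, and
   an exhaustive search over multisets of neighbourhoods, pruned as soon as a C4 or a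
   large sparse set appears, shows that every C4-free configuration has a 1-sparse
   j-set. Lower bounds: an explicit C4-free bipartite graph on R - 1 vertices without
   1-sparse j-set, and its induced subgraphs. *)

From mathcomp Require Import all_boot zify.
Set Implicit Arguments. Unset Strict Implicit. Unset Printing Implicit Defensive.

Lemma eq_set1_card (T : finType) (X : {set T}) x : (X == [set x]) = (x \in X) && (#|X| == 1).
Proof.
apply/eqP/andP => [->|[xX /cards1P [y Xy]]]; first by rewrite set11 cards1.
by move: xX; rewrite Xy inE => /eqP ->.
Qed.

Lemma setI_eq_set1 (T : finType) (X Y : {set T}) x :
  X :&: Y = [set x] -> (x \in X) && (x \in Y).
Proof. by move=> E; have := set11 x; rewrite -E inE. Qed.

Lemma card_split_ord m n (p : pred 'I_(m + n)) :
  #|[set x | p x]| = #|[set i | p (lshift n i)]| + #|[set k | p (rshift m k)]|.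
Proof. by rewrite -!sum1dep_card big_split_ord. Qed.

Lemma split_lshift m n (i : 'I_m) : split (lshift n i) = inl i.
Proof. exact: (unsplitK (inl i)). Qed.

Lemma split_rshift m n (k : 'I_n) : split (rshift m k) = inr k.
Proof. exact: (unsplitK (inr k)). Qed.

Lemma sparse_set_shrink n (e : rel 'I_n) k j (S : {set 'I_n}) :
  j <= #|S| -> (forall x, x \in S -> #|[set y in S | e x y]| <= k) ->
  exists T, sparse_set e k j T.
Proof.
move=> /card_geqP [s [s_uniq size_s sS]] degS; exists [set x in s]; split.
  by rewrite cardsE (card_uniqP s_uniq).
move=> x; rewrite inE => xs; apply: leq_trans (degS x (sS x xs)).
by apply/subset_leq_card/subsetP => y; rewrite !inE => /andP [/sS -> ->].
Qed.

Lemma sparse_set_embed n m (f : 'I_n -> 'I_m) (e' : rel 'I_n) (e : rel 'I_m) k j S :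
  injective f -> (forall x y, e' x y = e (f x) (f y)) ->
  sparse_set e' k j S -> sparse_set e k j (f @: S).
Proof.
move=> f_inj fe [cardS degS]; split; first by rewrite card_imset.
move=> _ /imsetP [x xS ->]; apply: leq_trans (degS x xS).
rewrite -(card_imset _ f_inj); apply/subset_leq_card/subsetP => z.
by rewrite inE => /andP [/imsetP [y yS ->] exy]; rewrite imset_f // inE yS fe.
Qed.

Lemma dense_set_embed n m (f : 'I_n -> 'I_m) (e' : rel 'I_n) (e : rel 'I_m) k j S :
  injective f -> (forall x y, e' x y = e (f x) (f y)) ->
  dense_set e' k j S -> dense_set e k j (f @: S).
Proof.
move=> f_inj fe; apply: sparse_set_embed => // x y.
by rewrite /compl_rel fe (inj_eq f_inj).
Qed.

(** * Set systems and their incidence graphs *)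

Section Incidence.
Variables (a b : nat) (N : 'I_b -> {set 'I_a}).
Implicit Types (A : {set 'I_a}) (B : {set 'I_b}) (S : {set 'I_(a + b)}).

Definition has_C4 : bool :=
  [exists k1, exists k2, (k1 != k2) && (1 < #|N k1 :&: N k2|)].

Definition sparse_pair A B : Prop :=
  (forall k, k \in B -> #|N k :&: A| <= 1) /\
  (forall i, i \in A -> #|[set k in B | i \in N k]| <= 1).

(* The largest [#|A| + #|B|] over sparse pairs [(A, B)]: [B] consists of the vertices
   without neighbour in [A] and of one private neighbour of each vertex of [A] having one. *)
Definition sparse_value A : nat :=
  #|A| + #|[set k | N k :&: A == set0]| + #|[set i in A | [exists k, N k :&: A == [set i]]]|.

Definition C4_or_sparse (j : nat) : bool := has_C4 || [exists A, j <= sparse_value A].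

Lemma sparse_pair_le_value A B : sparse_pair A B -> #|A| + #|B| <= sparse_value A.
Proof.
move=> [degB degA]; rewrite /sparse_value -addnA leq_add2l.
set Z := [set k | _]; set H := [set i in A | _].
rewrite -(cardsID Z B) leq_add ?subset_leq_card ?subsetIr //.
pose g k := [pick i in N k :&: A].
have gP k : k \in B :\: Z -> exists2 i, g k = Some i & N k :&: A = [set i].
  rewrite !inE => /andP [nZ kB].
  have /cards1P [i Ei] : #|N k :&: A| == 1 by rewrite eqn_leq degB // card_gt0.
  exists i => //; rewrite /g; case: pickP => [i'|/(_ i)]; rewrite Ei inE ?eqxx //.
  by move=> /eqP ->.
have g_inj : {in B :\: Z &, injective g}.
  move=> k1 k2 /[dup] k1BZ /gP [i -> /setI_eq_set1/andP [ik1 iA]].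
  move=> /[dup] k2BZ /gP [i' -> /setI_eq_set1/andP [ik2 _]] [Ei]; subst i'.
  move: k1BZ k2BZ; rewrite !inE => /andP [_ k1B] /andP [_ k2B].
  by move/card_le1_eqP: (degA i iA); apply; rewrite inE ?k1B ?k2B.
rewrite -(card_in_imset g_inj) -(card_imset H (@Some_inj _)) subset_leq_card //.
apply/subsetP => _ /imsetP [k /gP [i -> Ei] ->]; rewrite imset_f // inE.
have /andP [_ ->] := setI_eq_set1 Ei; apply/existsP; exists k; exact/eqP.
Qed.

Lemma sparse_pair_value A : exists B, sparse_pair A B /\ #|A| + #|B| = sparse_value A.
Proof.
rewrite /sparse_value; set Z := [set k | _]; set H := [set i in A | _].
pose h i := [pick k | N k :&: A == [set i]].
have hP i k : h i = Some k -> N k :&: A = [set i].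
  by rewrite /h; case: pickP => // k' /eqP E [<-].
have hH i : i \in H -> exists k, h i = Some k.
  rewrite inE => /andP [_ /existsP [k0 Ek0]]; rewrite /h.
  by case: pickP => [k _|/(_ k0)]; [exists k | rewrite Ek0].
set P := [set k | [exists i, h i == Some k]].
have PE k : k \in P -> exists2 i, h i = Some k & N k :&: A = [set i].
  by rewrite inE => /existsP [i /eqP hi]; exists i; last exact: hP.
have sparse : sparse_pair A (Z :|: P).
  split=> [k /setUP [|/PE [i _ ->]]|i iA]; first by rewrite inE => /eqP ->; rewrite cards0.
    by rewrite cards1.
  have hi k : k \in [set k in Z :|: P | i \in N k] -> h i = Some k.
    rewrite inE => /andP [/setUP kZP ik]; have : i \in N k :&: A by rewrite inE ik iA.
    case: kZP => [|/PE [i' hi' ->]]; first by rewrite inE => /eqP ->; rewrite inE.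
    by rewrite inE => /eqP ->.
  by apply/card_le1_eqP => k1 k2 /hi h1 /hi; rewrite h1 => -[->].
exists (Z :|: P); split=> //; apply/eqP; rewrite eqn_leq sparse_pair_le_value //=.
have ZP : Z :&: P = set0.
  apply/setP => k; rewrite !inE; apply/negbTE/andP => -[/eqP Z0 /existsP [i /eqP /hP]].
  by rewrite Z0 => /setP /(_ i); rewrite set11 inE.
have h_inj : {in H &, injective h}.
  move=> i1 i2 /hH [k h1] _; rewrite h1 => /esym /hP.
  by rewrite (hP _ _ h1) => /set1_inj.
rewrite -addnA leq_add2l cardsU ZP cards0 subn0 leq_add2l.
rewrite -(card_in_imset h_inj) -(card_imset P (@Some_inj _)) subset_leq_card //.
apply/subsetP => _ /imsetP [i /hH [k hik] ->]; rewrite hik imset_f // inE.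
by apply/existsP; exists i; rewrite hik.
Qed.

Lemma C4_or_sparse_large j : (j <= a) || (j <= b) -> C4_or_sparse j.
Proof.
move=> jab; apply/orP; right; apply/existsP; rewrite /sparse_value.
case/orP: jab => [ja|jb]; [exists setT | exists set0].
  by rewrite cardsT card_ord -addnA (leq_trans ja) ?leq_addr.
rewrite cards0 add0n (leq_trans jb) ?(leq_trans _ (leq_addr _ _)) //.
rewrite -{1}(card_ord b) -cardsT; apply/subset_leq_card/subsetP => k.
by rewrite !inE setI0.
Qed.

Definition incidence_graph : rel 'I_(a + b) :=
  fun x y => match split x, split y with
  | inl i, inr k | inr k, inl i => i \in N k
  | _, _ => false
  end.

Lemma incidence_graph_simple : simple_graph incidence_graph.
Proof.
rewrite /incidence_graph; split=> [x y|x]; last by case: (split x).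
by case: (split x) => ?; case: (split y).
Qed.

Lemma incidence_graph_bipartite x y : incidence_graph x y -> (x < a) != (y < a).
Proof. by rewrite /incidence_graph; case: split_ordP => ? _; case: split_ordP. Qed.

Definition left_part S : {set 'I_a} := [set i | lshift b i \in S].
Definition right_part S : {set 'I_b} := [set k | rshift a k \in S].
Definition join_parts A B : {set 'I_(a + b)} :=
  [set x | match split x with inl i => i \in A | inr k => k \in B end].

Lemma card_parts S : #|S| = #|left_part S| + #|right_part S|.
Proof. by rewrite -cardsE card_split_ord. Qed.

Lemma join_partsK A B : left_part (join_parts A B) = A /\ right_part (join_parts A B) = B.
Proof. by split; apply/setP => x; rewrite !inE ?split_lshift ?split_rshift. Qed.

Lemma incidence_deg_lshift S i :
  #|[set y in S | incidence_graph (lshift b i) y]| = #|[set k in right_part S | i \in N k]|.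
Proof.
rewrite card_split_ord -[RHS]add0n; congr (_ + _).
  by apply: eq_card0 => z; rewrite !inE /incidence_graph !split_lshift andbF.
by apply: eq_card => k; rewrite !inE /incidence_graph split_lshift split_rshift.
Qed.

Lemma incidence_deg_rshift S k :
  #|[set y in S | incidence_graph (rshift a k) y]| = #|N k :&: left_part S|.
Proof.
rewrite card_split_ord -[RHS]addn0; congr (_ + _).
  by apply: eq_card => i; rewrite !inE /incidence_graph split_lshift split_rshift andbC.
by apply: eq_card0 => z; rewrite !inE /incidence_graph !split_rshift andbF.
Qed.

Lemma incidence_codeg_lshift S i :
  #|[set y in S | compl_rel incidence_graph (lshift b i) y]| =
  #|left_part S :\ i| + #|[set k in right_part S | i \notin N k]|.
Proof.
rewrite card_split_ord /compl_rel /incidence_graph; congr (_ + _); apply: eq_card => z.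
  by rewrite !inE !split_lshift eq_shift andbT andbC eq_sym.
by rewrite !inE split_lshift split_rshift eq_shift.
Qed.

Lemma incidence_codeg_rshift S k :
  #|[set y in S | compl_rel incidence_graph (rshift a k) y]| =
  #|left_part S :\: N k| + #|right_part S :\ k|.
Proof.
rewrite card_split_ord /compl_rel /incidence_graph; congr (_ + _); apply: eq_card => z.
  by rewrite !inE split_lshift split_rshift eq_shift andbC.
by rewrite !inE !split_rshift eq_shift andbT andbC eq_sym.
Qed.

Lemma incidence_sparse_set j S : sparse_set incidence_graph 1 j S ->
  sparse_pair (left_part S) (right_part S) /\ #|left_part S| + #|right_part S| = j.
Proof.
move=> [cardS degS]; rewrite -card_parts; split=> //; split.
  by move=> k; rewrite inE => kS; rewrite -incidence_deg_rshift degS.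
by move=> i; rewrite inE => iS; rewrite -incidence_deg_lshift degS.
Qed.

Lemma sparse_pair_incidence j A B : sparse_pair A B -> j <= #|A| + #|B| ->
  exists S, sparse_set incidence_graph 1 j S.
Proof.
move=> [degB degA] jAB; have [lA rB] := join_partsK A B.
apply: (sparse_set_shrink (S := join_parts A B)); first by rewrite card_parts lA rB.
move=> x; rewrite inE; case: split_ordP => [i|k] ->.
  by rewrite incidence_deg_lshift rB; apply: degA.
by rewrite incidence_deg_rshift lA; apply: degB.
Qed.

Lemma incidence_dense_set S : dense_set incidence_graph 1 4 S -> has_C4.
Proof.
move=> [cardS codeg]; rewrite card_parts in cardS.
set A := left_part S in cardS codeg *; set B := right_part S in cardS codeg *.
have codegA i : i \in A -> #|A :\ i| + #|[set k in B | i \notin N k]| <= 1.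
  by rewrite inE => iS; rewrite -incidence_codeg_lshift codeg.
have codegB k : k \in B -> #|A :\: N k| + #|B :\ k| <= 1.
  by rewrite inE => kS; rewrite -incidence_codeg_rshift codeg.
have le2 (T : finType) (X : {set T}) : {in X, forall x, #|X :\ x| <= 1} -> #|X| <= 2.
  move=> X1; case: (set_0Vmem X) => [->|[x xX]]; first by rewrite cards0.
  by rewrite (cardsD1 x) xX add1n ltnS X1.
have cardA : #|A| <= 2 by apply: le2 => i /codegA; apply: leq_trans; apply: leq_addr.
have cardB : #|B| <= 2 by apply: le2 => k /codegB; apply: leq_trans; apply: leq_addl.
have B2 : #|B| = 2 by lia.
have AN k : k \in B -> A \subset N k.
  move=> kB; have := codegB k kB; have := cardsD1 k B; rewrite kB B2 add1n => -[<-].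
  by rewrite addn1 ltnS leqn0 cards_eq0 setD_eq0.
have /cards2P [k1 [k2 [k12 Bk]]] : #|B| == 2 by rewrite B2.
apply/existsP; exists k1; apply/existsP; exists k2; rewrite k12 /=.
apply: leq_trans (subset_leq_card (_ : A \subset _)); first lia.
by rewrite subsetI !AN // Bk !inE eqxx ?orbT.
Qed.

Lemma has_C4_incidence : has_C4 -> exists S, dense_set incidence_graph 1 4 S.
Proof.
case/existsP => k1 /existsP [k2 /andP [k12 /card_gt1P [i1 [i2 [i1N i2N i12]]]]].
set A := [set i1; i2]; set B := [set k1; k2]; have [lA rB] := join_partsK A B.
have AN k : k \in B -> A \subset N k.
  move: i1N i2N; rewrite !inE => /andP [i1k1 i1k2] /andP [i2k1 i2k2].
  by move=> /orP [] /eqP ->; apply/subsetP => i; rewrite !inE => /orP [] /eqP ->.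
have cardA : #|A| = 2 by rewrite cards2 i12.
have cardB : #|B| = 2 by rewrite cards2 k12.
exists (join_parts A B); split; first by rewrite card_parts lA rB cardA cardB.
move=> x; rewrite inE; case: split_ordP => [i|k] -> xS.
  rewrite incidence_codeg_lshift lA rB; have := cardsD1 i A; rewrite xS cardA add1n => -[<-].
  rewrite -[X in _ <= X]addn0 leq_add2l leqn0 cards_eq0; apply/eqP/setP => k.
  rewrite in_set in_set0; apply/negbTE; rewrite negb_and negbK.
  by case: (boolP (k \in B)) => // /AN/subsetP/(_ i xS) ->.
rewrite incidence_codeg_rshift lA rB; have := cardsD1 k B; rewrite xS cardB add1n => -[<-].
by rewrite -[X in _ <= X]add0n leq_add2r leqn0 cards_eq0 setD_eq0 AN.
Qed.

End Incidence.

Lemma bipartite_incidence n (e : rel 'I_n) : symmetric e -> bipartite e ->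
  exists a b (N : 'I_b -> {set 'I_a}) (g : 'I_(a + b) -> 'I_n),
    [/\ a + b = n, injective g & forall u v, incidence_graph N u v = e (g u) (g v)].
Proof.
move=> esym [c ec]; set A := [set x | c x].
have cA (i : 'I_#|A|) : c (enum_val i) by have := enum_valP i; rewrite inE.
have cB (k : 'I_#|~: A|) : c (enum_val k) = false.
  by have := enum_valP k; rewrite !inE => /negbTE.
have same x y : c x = c y -> e x y = false.
  by move=> cxy; apply/negbTE/negP => /ec; rewrite cxy eqxx.
pose g (u : 'I_(#|A| + #|~: A|)) : 'I_n :=
  match split u with inl i => enum_val i | inr k => enum_val k end.
exists #|A|, #|~: A|, (fun k => [set i | e (enum_val i) (enum_val k)]), g; split.
- by rewrite cardsC card_ord.
- move=> u v; rewrite /g; case: split_ordP => i ->; case: split_ordP => k -> E;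
    by move: (congr1 c E); rewrite ?cA ?cB // => _; move/enum_val_inj: E => ->.
- move=> u v; rewrite /incidence_graph /g.
  case: split_ordP => i _; case: split_ordP => k _; rewrite ?inE // same //.
    by rewrite !cA.
  by rewrite !cB.
Qed.

Lemma ramsey_prop_of_incidence j n :
  (forall a b (N : 'I_b -> {set 'I_a}), a + b = n -> C4_or_sparse N j) ->
  ramsey_prop bipartite 1 4 j n.
Proof.
move=> HN e [esym _] ebip.
have [a [b [N [g [abn g_inj Ng]]]]] := bipartite_incidence esym ebip.
case/orP: (HN a b N abn) => [/has_C4_incidence [S HS] | /existsP [A jA]].
  by left; exists (g @: S); apply: dense_set_embed HS.
have [B [AB ABv]] := sparse_pair_value N A; rewrite -ABv in jA.
have [S HS] := sparse_pair_incidence AB jA.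
by right; exists (g @: S); apply: sparse_set_embed HS.
Qed.

Lemma not_ramsey_prop_of_incidence a b (N : 'I_b -> {set 'I_a}) j m :
  ~~ C4_or_sparse N j -> m <= a + b -> ~ ramsey_prop bipartite 1 4 j m.
Proof.
rewrite negb_or negb_exists => /andP [noC4 /forallP small] le_m Hr.
pose f := widen_ord le_m.
have f_inj : injective f by move=> x y /(congr1 val) /= /val_inj.
have [Gsym Girr] := incidence_graph_simple N.
case: (Hr (fun x y => incidence_graph N (f x) (f y))).
- by split=> [x y|x]; [apply: Gsym | apply: Girr].
- by exists (fun x => f x < a) => x y /incidence_graph_bipartite.
- case=> S /(dense_set_embed f_inj (fun _ _ => erefl)) /incidence_dense_set.
  exact/negP.
- case=> S /(sparse_set_embed f_inj (fun _ _ => erefl)) /incidence_sparse_set [AB ABj].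
  by have := small (left_part (f @: S)); rewrite -ABj sparse_pair_le_value.
Qed.

(** * Exhaustive search over lists of neighbourhoods *)

Lemma pairwise_perm (T : eqType) (r : rel T) s1 s2 :
  symmetric r -> perm_eq s1 s2 -> pairwise r s1 = pairwise r s2.
Proof.
move=> r_sym; elim: s1 s2 => [|x s1 IH] s2; first by move=> /perm_size/esym/size0nil ->.
move=> eq12; have xs2 : x \in s2 by rewrite -(perm_mem eq12) mem_head.
move: eq12; case/splitPr: xs2 => s2a s2b eq12.
have e1 : perm_eq s1 (s2a ++ s2b).
  by rewrite -(perm_cons x); apply: perm_trans eq12 _; rewrite -cat1s perm_catCA.
rewrite /= (perm_all _ e1) (IH _ e1) !pairwise_cat allrel_consr all_cat /=.
rewrite (eq_all (a2 := r x) (fun y => r_sym y x)).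
by case: (all (r x) s2a); case: (all (r x) s2b); rewrite //= !andbF.
Qed.

Fixpoint sublists (T : Type) (s : seq T) : seq (seq T) :=
  if s is x :: s' then [seq x :: t | t <- sublists s'] ++ sublists s' else [:: [::]].

Lemma filter_sublists (T : eqType) (p : pred T) (s : seq T) : filter p s \in sublists s.
Proof.
elim: s => [|x s IH] //=; rewrite mem_cat; case: (p x) => /=.
  by rewrite mem_map ?IH // => u v [].
by rewrite IH orbT.
Qed.

Section PrunedSearch.
Variables (T : eqType) (P : pred (seq T)).

Fixpoint all_suffixes (f : T -> seq T -> bool) (s : seq T) : bool :=
  if s is x :: s' then f x s && all_suffixes f s' else true.

(* [search n [::] cs] visits the multisets of [n] elements of [cs], listed in the order
   of [cs], and stops extending a prefix as soon as it satisfies [P]. *)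
Fixpoint search (n : nat) (pre cs : seq T) : bool :=
  if P pre then true
  else if n is n'.+1 then all_suffixes (fun x cs' => search n' (rcons pre x) cs') cs
  else false.

Hypothesis P_catl : forall s1 s2, P s1 -> P (s1 ++ s2).
Hypothesis P_perm : forall s1 s2, perm_eq s1 s2 -> P s1 = P s2.

Lemma search_sound n pre cs s :
  search n pre cs -> size s = n -> {subset s <= cs} -> P (pre ++ s).
Proof.
elim: n pre cs s => [|n IHn] pre cs s /=.
  by case: ifP => // Ppre _ /size0nil ->; rewrite cats0.
case: ifP => [Ppre _ _ _|_]; first exact: P_catl.
elim: cs s => [|x cs IHcs] s /=; first by case: s => // y s _ _ /(_ y (mem_head _ _)).
case/andP => Hx Hcs size_s s_cs; case: (boolP (x \in s)) => [xs | xNs].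
  rewrite (P_perm (_ : perm_eq _ (rcons pre x ++ rem x s))).
    apply: IHn Hx _ _; first by rewrite size_rem // size_s.
    by move=> y /mem_rem /s_cs.
  by rewrite cat_rcons perm_cat2l perm_to_rem.
apply: IHcs => // y ys; have := s_cs y ys; rewrite inE => /orP [/eqP yx|//].
by move: xNs; rewrite -yx ys.
Qed.

End PrunedSearch.

(* Rows and left parts are lists of naturals; entries [>= a] are ignored, so every list
   denotes a subset of ['I_a]. *)
Definition set_of_seq a (r : seq nat) : {set 'I_a} := [set i : 'I_a | val i \in r].

Definition seq_of_set a (A : {set 'I_a}) : seq nat :=
  [seq x <- iota 0 a | x \in [seq val i | i <- enum A]].

Lemma seq_of_setK a (A : {set 'I_a}) : set_of_seq a (seq_of_set A) = A.
Proof.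
apply/setP => i; rewrite !inE mem_filter mem_iota add0n ltn_ord leq0n !andbT.
by rewrite (mem_map val_inj) mem_enum.
Qed.

Lemma count_iota_card n (p : pred nat) : count p (iota 0 n) = #|[set i : 'I_n | p i]|.
Proof.
rewrite -val_enum_ord count_map cardE /enum_mem size_filter count_filter.
by apply: eq_count => i; rewrite !inE andbT.
Qed.

Lemma count_card (T : Type) (x0 : T) (p : pred T) (s : seq T) :
  count p s = #|[set k : 'I_(size s) | p (nth x0 s k)]|.
Proof.
by rewrite -(count_iota_card _ (fun k => p (nth x0 s k))) -[in LHS](mkseq_nth x0 s) count_map.
Qed.

Definition cap a (r s : seq nat) : seq nat := [seq x <- iota 0 a | (x \in r) && (x \in s)].

Lemma size_cap a r s : size (cap a r s) = #|set_of_seq a r :&: set_of_seq a s|.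
Proof. by rewrite size_filter count_iota_card; apply: eq_card => i; rewrite !inE. Qed.

Definition c4free a (L : seq (seq nat)) : bool :=
  pairwise (fun r s => size (cap a r s) < 2) L.

Lemma c4free_has_C4 a b L (N : 'I_b -> {set 'I_a}) :
  size L = b -> (forall k, N k = set_of_seq a (nth [::] L k)) -> c4free a L = ~~ has_C4 N.
Proof.
move=> sizeL NL; have capN (k1 k2 : 'I_b) :
    size (cap a (nth [::] L k1) (nth [::] L k2)) = #|N k1 :&: N k2|.
  by rewrite size_cap !NL.
apply/(pairwiseP [::])/existsPn => [small k1|noC4 i j].
  apply/existsPn => k2; rewrite negb_and -leqNgt -implyNb negbK; apply/implyP => k12.
  have [lt|lt|/val_inj eq] := ltngtP k1 k2; last by rewrite eq eqxx in k12.
    by rewrite -ltnS -capN small ?inE ?sizeL.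
  by rewrite -ltnS setIC -capN small ?inE ?sizeL.
rewrite !inE sizeL => ib jb ij.
move: (noC4 (Ordinal ib)) => /existsPn /(_ (Ordinal jb)).
by rewrite negb_and -leqNgt -capN -val_eqE /= (ltn_eqF ij) ltnS.
Qed.

Definition sparse_val a (L : seq (seq nat)) (m : seq nat) : nat :=
  let private := [seq r <- L | size (cap a r m) == 1] in
  count (fun x => x \in m) (iota 0 a) + count (fun r => size (cap a r m) == 0) L
  + count (fun x => (x \in m) && has (fun r => x \in r) private) (iota 0 a).

Lemma sparse_val_value a b L (N : 'I_b -> {set 'I_a}) m :
  size L = b -> (forall k, N k = set_of_seq a (nth [::] L k)) ->
  sparse_val a L m = sparse_value N (set_of_seq a m).
Proof.
move=> sizeL NL; subst b; rewrite /sparse_val /sparse_value !count_iota_card (count_card [::]).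
congr (_ + _ + _); apply: eq_card => x; rewrite !inE.
  by rewrite size_cap -NL cards_eq0.
rewrite !has_count count_filter -has_count.
case xm: (val x \in m) => //=; apply/(has_nthP [::])/existsP => [[k kL] | [k]].
  by move=> /andP [xk capk]; exists (Ordinal kL); rewrite eq_set1_card NL !inE -size_cap xm xk.
rewrite eq_set1_card NL !inE -size_cap xm andbT => /andP [xk capk].
by exists k => //=; rewrite xk.
Qed.

(* [find] rather than [has]: under call-by-value evaluation [has] would evaluate every
   sublist even after a witness is found. *)
Definition solved a j (L : seq (seq nat)) : bool :=
  if c4free a L then
    find (fun m => j <= sparse_val a L m) (sublists (iota 0 a)) < size (sublists (iota 0 a))
  else true.

Lemma solved_C4_or_sparse a b j L (N : 'I_b -> {set 'I_a}) :
  size L = b -> (forall k, N k = set_of_seq a (nth [::] L k)) ->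
  solved a j L = C4_or_sparse N j.
Proof.
move=> sizeL NL; rewrite /solved /C4_or_sparse (c4free_has_C4 sizeL NL) -has_find.
case: (has_C4 N) => //=; apply/hasP/existsP => [[m _] | [A]].
  by rewrite (sparse_val_value _ sizeL NL); exists (set_of_seq a m).
by exists (seq_of_set A); rewrite ?filter_sublists // (sparse_val_value _ sizeL NL) seq_of_setK.
Qed.

Lemma sparse_val_catl a L1 L2 m : sparse_val a L1 m <= sparse_val a (L1 ++ L2) m.
Proof.
rewrite /sparse_val count_cat; apply: leq_add; first by rewrite leq_add2l leq_addr.
by apply: sub_count => x /andP [-> /= xL1]; rewrite filter_cat has_cat xL1.
Qed.

Lemma sparse_val_perm a L1 L2 m : perm_eq L1 L2 -> sparse_val a L1 m = sparse_val a L2 m.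
Proof.
move=> eqL; rewrite /sparse_val (permP eqL); congr (_ + _); apply: eq_count => x.
by rewrite (perm_has _ (perm_filter _ eqL)).
Qed.

Lemma solved_catl a j L1 L2 : solved a j L1 -> solved a j (L1 ++ L2).
Proof.
rewrite /solved -!has_find; case c4: (c4free a (L1 ++ L2)) => //.
move: c4; rewrite /c4free pairwise_cat => /and3P [_ -> _] /hasP [m mS jm].
by apply/hasP; exists m => //; apply: leq_trans jm (sparse_val_catl _ _ _ _).
Qed.

Lemma solved_perm a j L1 L2 : perm_eq L1 L2 -> solved a j L1 = solved a j L2.
Proof.
move=> eqL; rewrite /solved -!has_find /c4free (pairwise_perm _ eqL) => [|r s]; last first.
  by rewrite !size_cap setIC.
by congr (if _ then _ else _); apply: eq_has => m; rewrite (sparse_val_perm _ _ eqL).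
Qed.

Definition cover a b j : bool := search (solved a j) b [::] (sublists (iota 0 a)).

Lemma cover_C4_or_sparse a b j :
  cover a b j -> forall N : 'I_b -> {set 'I_a}, C4_or_sparse N j.
Proof.
move=> covered N; pose L := [seq seq_of_set (N k) | k <- enum 'I_b].
have sizeL : size L = b by rewrite size_map size_enum_ord.
rewrite -(solved_C4_or_sparse j sizeL) => [|k]; last first.
  by rewrite (nth_map k) ?size_enum_ord // nth_ord_enum seq_of_setK.
apply: (search_sound (@solved_catl a j) (@solved_perm a j) covered sizeL).
by move=> _ /mapP [k _ ->]; apply: filter_sublists.
Qed.

Definition certificate a b j (L : seq (seq nat)) : bool := (size L == b) && ~~ solved a j L.

Lemma certificate_not_C4_or_sparse a b j L : certificate a b j L ->
  ~~ C4_or_sparse (fun k : 'I_b => set_of_seq a (nth [::] L k)) j.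
Proof. by case/andP => /eqP sizeL; rewrite -(solved_C4_or_sparse j sizeL). Qed.

Definition upper_certified j n : bool :=
  all (fun a => if (a < j) && (n - a < j) then cover a (n - a) j else true) (iota 0 n.+1).

Lemma ramsey_prop_of_cover j n : upper_certified j n -> ramsey_prop bipartite 1 4 j n.
Proof.
move=> /allP covered; apply: ramsey_prop_of_incidence => a b N abn.
have [ja | aj] := leqP j a; first by apply: C4_or_sparse_large; rewrite ja.
have [jb | bj] := leqP j b; first by apply: C4_or_sparse_large; rewrite jb orbT.
apply: cover_C4_or_sparse; have := covered a; rewrite -abn addKn aj bj; apply.
by rewrite mem_iota /= ltnS leq_addr.
Qed.

Lemma ramsey_num_of_certificates j a b L :
  certificate a b j L -> upper_certified j (a + b).+1 ->
  ramsey_num_is bipartite 1 4 j (a + b).+1.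
Proof.
move=> /certificate_not_C4_or_sparse lower upper; split; first exact: ramsey_prop_of_cover.
by move=> m; rewrite ltnS; apply: not_ramsey_prop_of_incidence lower.
Qed.

(** * Extremal graphs *)

(* Lines of the projective planes of orders 2 and 3, as translates of the perfect
   difference sets {0, 1, 3} mod 7 and {0, 1, 3, 9} mod 13. *)
Definition cyclic_plane q (D : seq nat) : seq (seq nat) :=
  [seq [seq (i + d) %% q | d <- D] | i <- iota 0 q].

Lemma ramsey_bipartite_4_3 : ramsey_num_is bipartite 1 4 3 4.
Proof. by apply: (@ramsey_num_of_certificates _ 1 2 [:: [:: 0]; [:: 0]]); vm_compute. Qed.

Lemma ramsey_bipartite_4_4 : ramsey_num_is bipartite 1 4 4 5.
Proof. by apply: (@ramsey_num_of_certificates _ 2 2 [:: [:: 1]; [:: 1]]); vm_compute. Qed.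

Lemma ramsey_bipartite_4_5 : ramsey_num_is bipartite 1 4 5 7.
Proof.
by apply: (@ramsey_num_of_certificates _ 3 3 [:: [:: 0; 2]; [:: 0]; [:: 1; 2]]); vm_compute.
Qed.

Lemma ramsey_bipartite_4_6 : ramsey_num_is bipartite 1 4 6 9.
Proof.
apply: (@ramsey_num_of_certificates _ 4 4 [:: [:: 1; 2; 3]; [:: 3]; [:: 0; 1]; [:: 0; 3]]);
  by vm_compute.
Qed.

Lemma ramsey_bipartite_4_7 : ramsey_num_is bipartite 1 4 7 12.
Proof.
apply: (@ramsey_num_of_certificates _ 6 5
  [:: [:: 3; 4; 5]; [:: 0; 3]; [:: 1; 2; 3]; [:: 0; 1; 5]; [:: 0; 2; 4]]); by vm_compute.
Qed.

Lemma ramsey_bipartite_4_8 : ramsey_num_is bipartite 1 4 8 15.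
Proof. by apply: (@ramsey_num_of_certificates _ 7 7 (cyclic_plane 7 [:: 0; 1; 3])); vm_compute. Qed.

Lemma ramsey_bipartite_4_9 : ramsey_num_is bipartite 1 4 9 17.
Proof.
apply: (@ramsey_num_of_certificates _ 8 8 [:: [:: 1; 2; 4]; [:: 2; 5; 7]; [:: 1; 3; 7];
  [:: 4; 5; 6]; [:: 0; 3; 5]; [:: 0; 4; 7]; [:: 2; 3; 6]; [:: 0; 1; 6]]); by vm_compute.
Qed.

Lemma ramsey_bipartite_4_13 : ramsey_num_is bipartite 1 4 13 25.
Proof.
apply: (@ramsey_num_of_certificates _ 12 12 [:: [:: 1; 4; 8; 9]; [:: 1; 2; 5; 7];
  [:: 0; 7; 8; 10]; [:: 2; 3; 9; 10]; [:: 3; 5; 8; 11]; [:: 7; 9; 11]; [:: 4; 5; 10];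
  [:: 1; 6; 10; 11]; [:: 2; 6; 8]; [:: 3; 4; 6; 7]; [:: 0; 1; 3]; [:: 0; 2; 4; 11]]);
  by vm_compute.
Qed.

Lemma ramsey_bipartite_4_14 : ramsey_num_is bipartite 1 4 14 27.
Proof.
by apply: (@ramsey_num_of_certificates _ 13 13 (cyclic_plane 13 [:: 0; 1; 3; 9])); vm_compute.
Qed.

Theorem theorem5p3 :
  (forall j, j \in [:: 4; 5; 6] -> ramsey_num_is bipartite 1 4 j (2 * j - 3)) /\
  (forall j, j \in [:: 3; 7] -> ramsey_num_is bipartite 1 4 j (2 * j - 2)) /\
  (forall j, j \in [:: 8; 9; 13; 14] -> ramsey_num_is bipartite 1 4 j (2 * j - 1)).
Proof.
split; [|split] => j; rewrite !inE.
- case/or3P => /eqP ->.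
  + exact: ramsey_bipartite_4_4.
  + exact: ramsey_bipartite_4_5.
  + exact: ramsey_bipartite_4_6.
- case/orP => /eqP ->.
  + exact: ramsey_bipartite_4_3.
  + exact: ramsey_bipartite_4_7.
- case/or4P => /eqP ->.
  + exact: ramsey_bipartite_4_8.
  + exact: ramsey_bipartite_4_9.
  + exact: ramsey_bipartite_4_13.
  + exact: ramsey_bipartite_4_14.
Qed.
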